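(* Let $G_H$ be a finite undirected multigraph (parallel edges allowed, no self-loops) with vertex set $V$ and edge set partitioned as $E = S \sqcup S^c$ into secure edges $S$ and insecure edges $S^c$, and let $0 < p_J^{S^c} \le p_J^{S} \le p_I$ be real costs satisfying $p_J^{S^c} < p_I/2$ and $p_J^{S} + p_J^{S^c} \ge p_I$. Consider the following two problems. (II-A) Give weight $p_I - p_J^{S^c}$ to secure edges and $p_J^{S^c}$ to insecure edges, and find a cut $C^*$ of minimum weight among cuts $C$ with $n^S_C < |C|/2$; form the attack on $C^*$ that injects data into $n^S_{C^*}+1$ insecure edges of $C^*$ and jams all other insecure edges of $C^*$. (II-B) Give weight $p_J^{S}$ to secure edges and $p_I - p_J^{S}$ to insecure edges, and find a cut $C^*$ of minimum weight among cuts $C$ with $n^S_C \ge |C|/2$ and $n^{S^c}_C > 0$; form the attack on $C^*$ that injects data into all insecure edges of $C^*$ and jams $n^S_{C^*} + 1 - n^{S^c}_{C^*}$ secure edges of $C^*$. Then, among the attacks produced by those of the two problems that have a feasible solution, one of minimum cost is an optimal detectable generalized attack in $G_H$.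
   Context: For a nonempty proper subset $U \subsetneq V$, the cut $\delta(U)$ is the set of edges with exactly one endpoint in $U$; a cut of $G_H$ is any set of this form. For a cut $C$, $n^S_C = |C\cap S|$ and $n^{S^c}_C = |C \cap S^c|$. The costs are: $p_J^{S^c}$ per jammed insecure edge, $p_J^S$ per jammed secure edge, $p_I$ per insecure edge with injected data. A generalized attack is a triple $(C,J,I)$ where $C$ is a cut, $J \subseteq C$ is the set of jammed edges, and $I \subseteq (C \cap S^c)\setminus J$ is a nonempty set of injected edges; its cost is $p_J^{S}|J\cap S| + p_J^{S^c}|J \cap S^c| + p_I |I|$. The attack is detectable if $2|I| > |C \setminus J|$ (the injected edges form a strict majority of the non-jammed edges of the cut). An optimal detectable generalized attack is one of minimum cost among all detectable generalized attacks. *)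

From HB Require Import structures.
From mathcomp Require Import all_boot all_order all_algebra.
Set Implicit Arguments. Unset Strict Implicit. Unset Printing Implicit Defensive.
Import Order.TTheory GRing.Theory Num.Theory.
Local Open Scope ring_scope.

(* A finite multigraph G_H: vertices V, edges E (parallel edges allowed since
   distinct edges may share endpoints), endpoint maps src/dst (no self-loops is
   a hypothesis of the theorem).  S is the set of secure edges; its complement
   ~: S is the set of insecure edges S^c. *)

Section Attacks.
Variables (V E : finType) (src dst : E -> V) (S : {set E}).
Variable R : realFieldType.
Variables (pJS pJc pI : R).

Definition delta (U : {set V}) : {set E} :=
  [set e | (src e \in U) != (dst e \in U)].

Definition is_cut (C : {set E}) : Prop :=
  exists U : {set V}, [/\ U != set0, U != setT & C = delta U].

Definition nS (C : {set E}) : nat := #|C :&: S|.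
Definition nSc (C : {set E}) : nat := #|C :\: S|.

Definition gen_attack (C J I : {set E}) : Prop :=
  [/\ is_cut C, J \subset C, I \subset (C :\: S) :\: J & I != set0].

Definition attack_cost (J I : {set E}) : R :=
  pJS * #|J :&: S|%:R + pJc * #|J :\: S|%:R + pI * #|I|%:R.

Definition detectable (C J I : {set E}) : Prop :=
  (#|C :\: J| < 2 * #|I|)%N.

Definition detectable_gen_attack (C J I : {set E}) : Prop :=
  gen_attack C J I /\ detectable C J I.

Definition optimal_detectable_attack (C J I : {set E}) : Prop :=
  detectable_gen_attack C J I /\
  forall C' J' I', detectable_gen_attack C' J' I' ->
    attack_cost J I <= attack_cost J' I'.

Definition feasA (C : {set E}) : Prop := is_cut C /\ (2 * nS C < #|C|)%N.
Definition weightA (C : {set E}) : R :=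
  (pI - pJc) * (nS C)%:R + pJc * (nSc C)%:R.
Definition producedA (C J I : {set E}) : Prop :=
  [/\ feasA C, (forall C', feasA C' -> weightA C <= weightA C'),
      I \subset C :\: S, #|I| = (nS C).+1 & J = (C :\: S) :\: I].

Definition feasB (C : {set E}) : Prop :=
  [/\ is_cut C, (#|C| <= 2 * nS C)%N & (0 < nSc C)%N].
Definition weightB (C : {set E}) : R :=
  pJS * (nS C)%:R + (pI - pJS) * (nSc C)%:R.
Definition producedB (C J I : {set E}) : Prop :=
  [/\ feasB C, (forall C', feasB C' -> weightB C <= weightB C'),
      I = C :\: S, J \subset C :&: S & #|J| = (nS C + 1 - nSc C)%N].

Definition produced (C J I : {set E}) : Prop :=
  producedA C J I \/ producedB C J I.

End Attacks.

(** A detectable attack (C, J, I) with a = |J ∩ S|, b = |J \ S|, i = |I| satisfies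
    b + i <= n^{S^c}_C and n^S_C + n^{S^c}_C < 2 i + a + b.  Under the price
    hypotheses these two constraints alone make its cost p_J^S a + p_J^{S^c} b + p_I i
    exceed, by a nonnegative combination of them, both costs of the attacks that
    II-A and II-B would build on C, namely w_A(C) + p_I - p_J^{S^c} and w_B(C) + p_J^S;
    and C is feasible for II-A or for II-B.  Minimality of the cut chosen by that
    problem then gives a produced attack no more expensive than (C, J, I). *)

From HB Require Import structures.
From mathcomp Require Import all_boot all_order all_algebra.
From mathcomp Require Import zify ring lra.
Set Implicit Arguments. Unset Strict Implicit. Unset Printing Implicit Defensive.
Import Order.TTheory GRing.Theory Num.Theory.
Local Open Scope ring_scope.

Lemma exists_subset_card (T : finType) (A : {set T}) k :
  (k <= #|A|)%N -> exists2 B : {set T}, B \subset A & #|B| = k.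
Proof.
elim: k => [|k IHk] le_kA; first by exists set0; rewrite ?sub0set ?cards0.
have [B sBA cardB] := IHk (ltnW le_kA).
have : (0 < #|A :\: B|)%N by rewrite cardsDS // cardB subn_gt0.
case/card_gt0P => x; rewrite inE => /andP[xNB xA].
by exists (x |: B); rewrite ?subUset ?sub1set ?xA ?sBA // cardsU1 xNB cardB.
Qed.

Definition price_conditions {R : numDomainType} (pJS pJc pI : R) : Prop :=
  [/\ 0 <= pJc, pJc <= pJS, 2 * pJc <= pI & pI <= pJS + pJc].

Lemma cost_ge_weightA (R : realDomainType) (pJS pJc pI a b i n1 n2 : R) :
    price_conditions pJS pJc pI -> 0 <= a -> b + i <= n2 ->
    n1 + n2 + 1 <= 2 * i + a + b ->
  (pI - pJc) * n1 + pJc * n2 + (pI - pJc) <= pJS * a + pJc * b + pI * i.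
Proof.
case=> pJc_ge0 pJc_le_pJS pJc2_le_pI pI_le_pJ a_ge0 bi_le_n2 majority.
have -> : pJS * a + pJc * b + pI * i = (pI - pJc) * n1 + pJc * n2 + (pI - pJc)
    + ((pI - pJc) * (2 * i + a + b - (n1 + n2 + 1))
       + (pJS + pJc - pI) * a + (pI - 2 * pJc) * (n2 - (b + i))) by ring.
by rewrite lerDl; do 2?apply: addr_ge0; apply: mulr_ge0; lra.
Qed.

Lemma cost_ge_weightB (R : realDomainType) (pJS pJc pI a b i n1 n2 : R) :
    price_conditions pJS pJc pI -> 0 <= b -> b + i <= n2 ->
    n1 + n2 + 1 <= 2 * i + a + b ->
  pJS * n1 + (pI - pJS) * n2 + pJS <= pJS * a + pJc * b + pI * i.
Proof.
case=> pJc_ge0 pJc_le_pJS pJc2_le_pI pI_le_pJ b_ge0 bi_le_n2 majority.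
have -> : pJS * a + pJc * b + pI * i = pJS * n1 + (pI - pJS) * n2 + pJS
    + (pJS * (2 * i + a + b - (n1 + n2 + 1))
       + (pJS - pJc) * (n2 - (b + i)) + (pJS + pJc - pI) * (n2 - i)) by ring.
by rewrite lerDl; do 2?apply: addr_ge0; apply: mulr_ge0; lra.
Qed.

Section Attacks.
Variables (V E : finType) (src dst : E -> V) (S : {set E}).
Variables (R : realFieldType) (pJS pJc pI : R).

Local Notation is_cut := (is_cut src dst).
Local Notation feasA := (feasA src dst S).
Local Notation feasB := (feasB src dst S).
Local Notation cost := (attack_cost S pJS pJc pI).
Local Notation detectable_gen_attack := (detectable_gen_attack src dst S).

Definition is_cutb (C : {set E}) : bool :=
  [exists U : {set V}, [&& U != set0, U != setT & C == delta src dst U]].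

Lemma is_cutP C : reflect (is_cut C) (is_cutb C).
Proof.
apply: (iffP existsP) => [[U /and3P[U0 UT /eqP->]]|[U [U0 UT ->]]]; exists U => //.
by rewrite U0 UT eqxx.
Qed.

Lemma feasAP C : reflect (feasA C) (is_cutb C && (2 * nS S C < #|C|)%N).
Proof. by apply: (iffP andP) => -[/is_cutP]. Qed.

Lemma feasBP C :
  reflect (feasB C) [&& is_cutb C, (#|C| <= 2 * nS S C)%N & (0 < nSc S C)%N].
Proof. by apply: (iffP and3P) => -[/is_cutP]. Qed.

Lemma cardsIDS C : (nS S C + nSc S C)%N = #|C|.
Proof. exact: cardsID. Qed.

Lemma detectable_counts C J I : detectable_gen_attack C J I ->
  (#|J :\: S| + #|I| <= nSc S C)%N /\
  (nS S C + nSc S C < 2 * #|I| + #|J :&: S| + #|J :\: S|)%N.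
Proof.
case=> [[_ sJC sI _] det]; move: sI; rewrite subsetD => /andP[sI dIJ]; split.
  have dJI : [disjoint J :\: S & I] by rewrite disjoint_sym (disjointWr (subsetDl J S)).
  have sJIC : (J :\: S) :|: I \subset C :\: S by rewrite subUset setSD.
  by move/subset_leq_card: sJIC; rewrite cardsU (disjoint_setI0 dJI) cards0 subn0.
move: det; rewrite /detectable cardsDS // -(cardsID S J) -cardsIDS.
have : (#|J :&: S| + #|J :\: S| <= nS S C + nSc S C)%N.
  by rewrite cardsIDS cardsID subset_leq_card.
lia.
Qed.

Lemma detectable_feas C J I : detectable_gen_attack C J I -> feasA C \/ feasB C.
Proof.
move=> att; have [[[cutC _ _ I0] _] [bi_le_nSc _]] := (att, detectable_counts att).
case: (ltnP (2 * nS S C) #|C|) => hC; [left | right]; split => //.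
by apply: leq_trans bi_le_nSc; rewrite addn_gt0 [(0 < #|I|)%N]card_gt0 I0 orbT.
Qed.

Lemma producedA_detectable C J I :
  producedA src dst S pJc pI C J I -> detectable_gen_attack C J I.
Proof.
case=> [[cutC hC] _ sI cardI ->]; have sJC : C :\: S :\: I \subset C.
  by rewrite (subset_trans (subsetDl _ _)) ?subsetDl.
split; first split.
- exact: cutC.
- exact: sJC.
- by apply/subsetP => e eI; rewrite in_setD (subsetP sI e eI) in_setD eI.
- by rewrite -card_gt0 cardI.
rewrite /detectable (cardsDS sJC) (cardsDS sI) cardI.
move: hC (cardsIDS C); rewrite /nSc; lia.
Qed.

Lemma producedA_cost C J I : producedA src dst S pJc pI C J I ->
  cost J I = weightA S pJc pI C + (pI - pJc).
Proof.
case=> [_ _ sI cardI defJ]; have dJS : [disjoint J & S].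
  by move: (subsetDl (C :\: S) I); rewrite -defJ subsetD => /andP[].
have cardJ : (#|J| + #|I| = nSc S C)%N.
  by rewrite defJ (cardsDS sI) subnK ?subset_leq_card.
have cardJR : #|J|%:R = (nSc S C)%:R - (nS S C)%:R - 1 :> R.
  by rewrite -cardJ cardI natrD -addn1 natrD; ring.
rewrite /attack_cost /weightA (disjoint_setI0 dJS) (setDidPl dJS) cards0 cardJR cardI.
rewrite -addn1 natrD; ring.
Qed.

Lemma producedB_detectable C J I :
  producedB src dst S pJS pI C J I -> detectable_gen_attack C J I.
Proof.
case=> [[cutC hC nSc_gt0] _ -> sJ cardJ]; have sJC : J \subset C.
  exact: subset_trans sJ (subsetIl _ _).
have dJS : [disjoint (C :\: S) & J].
  apply: disjointWr (subset_trans sJ (subsetIr C S)) _.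
  by move: (subxx (C :\: S)); rewrite subsetD => /andP[].
split; first split.
- exact: cutC.
- exact: sJC.
- by rewrite (setDidPl dJS).
- by rewrite -card_gt0.
rewrite /detectable (cardsDS sJC) cardJ.
by move: hC nSc_gt0 (cardsIDS C); rewrite /nSc; lia.
Qed.

Lemma producedB_cost C J I : producedB src dst S pJS pI C J I ->
  cost J I = weightB S pJS pI C + pJS.
Proof.
case=> [[_ hC _] _ -> sJ cardJ]; have sJS : J \subset S.
  exact: subset_trans sJ (subsetIr _ _).
have cardJR : #|J|%:R = (nS S C)%:R + 1 - (nSc S C)%:R :> R.
  apply/eqP; rewrite eq_sym subr_eq natr1 -natrD eqr_nat cardJ.
  by apply/eqP; move: hC (cardsIDS C); rewrite /nS /nSc; lia.
have JS0 : J :\: S = set0 by apply/eqP; rewrite setD_eq0.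
by rewrite /attack_cost /weightB (setIidPl sJS) JS0 cards0 cardJR; ring.
Qed.

Lemma producedA_exists C0 :
  feasA C0 -> exists C J I, producedA src dst S pJc pI C J I.
Proof.
move/feasAP => fC0.
case: (arg_minP (weightA S pJc pI)
  (P := fun C => is_cutb C && (2 * nS S C < #|C|)%N) fC0) => C /feasAP fC minC.
have [I sI cardI] : exists2 I : {set E}, I \subset C :\: S & #|I| = (nS S C).+1.
  by apply: exists_subset_card; case: fC => _; move: (cardsIDS C); rewrite /nSc; lia.
by exists C, (C :\: S :\: I), I; split => // C' /feasAP /minC.
Qed.

Lemma producedB_exists C0 :
  feasB C0 -> exists C J I, producedB src dst S pJS pI C J I.
Proof.
move/feasBP => fC0.
case: (arg_minP (weightB S pJS pI)
  (P := fun C => [&& is_cutb C, #|C| <= 2 * nS S C & 0 < nSc S C]%N) fC0)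
  => C /feasBP fC minC.
have [J sJ cardJ] :
    exists2 J : {set E}, J \subset C :&: S & #|J| = (nS S C + 1 - nSc S C)%N.
  by apply: exists_subset_card; case: fC => _ _; rewrite /nS; lia.
by exists C, J, (C :\: S); split => // C' /feasBP /minC.
Qed.

Hypothesis prices : price_conditions pJS pJc pI.

Lemma detectable_counts_real C J I : detectable_gen_attack C J I ->
  (#|J :\: S|%:R + #|I|%:R <= (nSc S C)%:R :> R) /\
  (nS S C)%:R + (nSc S C)%:R + 1 <= 2 * #|I|%:R + #|J :&: S|%:R + #|J :\: S|%:R :> R.
Proof.
case/detectable_counts; rewrite -natrD ler_nat => -> majority; split => //.
by move: majority; rewrite -addn1 -(ler_nat R) !natrD; lra.
Qed.

Lemma detectable_cost_geA C J I : detectable_gen_attack C J I ->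
  weightA S pJc pI C + (pI - pJc) <= cost J I.
Proof.
by case/detectable_counts_real => bi_le majority; apply: cost_ge_weightA.
Qed.

Lemma detectable_cost_geB C J I : detectable_gen_attack C J I ->
  weightB S pJS pI C + pJS <= cost J I.
Proof.
by case/detectable_counts_real => bi_le majority; apply: cost_ge_weightB.
Qed.

Lemma exists_produced_below C J I : detectable_gen_attack C J I ->
  exists C1 J1 I1,
    produced src dst S pJS pJc pI C1 J1 I1 /\ cost J1 I1 <= cost J I.
Proof.
move=> att; case: (detectable_feas att) => [fA | fB].
  have [C1 [J1 [I1 prodA]]] := producedA_exists fA.
  exists C1, J1, I1; split; first by left.
  rewrite (producedA_cost prodA); apply: le_trans (detectable_cost_geA att).
  by rewrite lerD2r; case: prodA => _ minC1 _ _ _; apply: minC1.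
have [C1 [J1 [I1 prodB]]] := producedB_exists fB.
exists C1, J1, I1; split; first by right.
rewrite (producedB_cost prodB); apply: le_trans (detectable_cost_geB att).
by rewrite lerD2r; case: prodB => _ minC1 _ _ _; apply: minC1.
Qed.

End Attacks.

Theorem theorem6 (V E : finType) (src dst : E -> V) (S : {set E})
  (R : realFieldType) (pJS pJc pI : R)
  (no_loop : forall e, src e != dst e)
  (h0 : 0 < pJc) (h1 : pJc <= pJS) (h2 : pJS <= pI)
  (h3 : pJc < pI / 2) (h4 : pI <= pJS + pJc) :
  (* every produced attack of minimum cost among the produced attacks
     is an optimal detectable generalized attack *)
  (forall C J I,
     produced src dst S pJS pJc pI C J I ->
     (forall C' J' I', produced src dst S pJS pJc pI C' J' I' ->
        attack_cost S pJS pJc pI J I <= attack_cost S pJS pJc pI J' I') ->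
     optimal_detectable_attack src dst S pJS pJc pI C J I)
  /\
  (* and the set of produced attacks is nonempty whenever a detectable
     generalized attack exists *)
  ((exists C J I, detectable_gen_attack src dst S C J I) ->
   exists C J I, produced src dst S pJS pJc pI C J I).
Proof.
have prices : price_conditions pJS pJc pI.
  split=> //; first exact: ltW.
  by move: h3; rewrite ltr_pdivlMr // mulrC => /ltW.
split=> [C J I prod minJI | [C [J [I att]]]].
  split; first by case: prod => [/producedA_detectable | /producedB_detectable].
  move=> C' J' I' /(exists_produced_below prices) [C1 [J1 [I1 [prod1 le1]]]].
  exact: le_trans (minJI _ _ _ prod1) le1.
have [C1 [J1 [I1 [prod1 _]]]] := exists_produced_below prices att.
by exists C1, J1, I1.
Qed.
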